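(* Let $n\ge1$ and $F_n=F(1)\otimes\cdots\otimes F(n)\subseteq\mathbb{S}_n$. Then: (1) The centre of $\mathbb{S}_n$ is $K$. (2) For every nonzero $a\in\mathbb{S}_n$ one has $F_na\neq0$ and $aF_n\ne0$. (3) $F_n$ is the smallest nonzero ideal of $\mathbb{S}_n$, i.e. it is contained in every nonzero ideal. Moreover, $F_n^2=F_n$, and $F_n$ is an essential left and right submodule of $\mathbb{S}_n$. $F_n$ is the socle of $\mathbb{S}_n$ as a left module and as a right module, $F_n$ is the socle of the $\mathbb{S}_n$-bimodule $\mathbb{S}_n$, and $F_n$ is a simple $\mathbb{S}_n$-bimodule. (4) $\mathbb{S}_n$ is a prime algebra. (5) Every nonzero ideal of $\mathbb{S}_n$ is an essential left and right submodule of $\mathbb{S}_n$.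
   Context: $K$ is a field. $\mathbb{S}_n$ is the $K$-algebra generated by $x_1,\dots,x_n,y_1,\dots,y_n$ subject to the defining relations $y_ix_i=1$ for all $i$, and $[x_i,y_j]=[x_i,x_j]=[y_i,y_j]=0$ for all $i\ne j$. For each $i$, $\mathbb{S}_1(i)$ is the subalgebra generated by $x_i,y_i$, and $\mathbb{S}_n=\mathbb{S}_1(1)\otimes\cdots\otimes\mathbb{S}_1(n)$. $F(i)=\bigoplus_{k,l\in\mathbb N}K(x_i^ky_i^l-x_i^{k+1}y_i^{l+1})$, an ideal of $\mathbb{S}_1(i)$. *)

(* The Jacobson algebra S_n is specified by its presentation
   (universal property) inside an arbitrary K-algebra A. *)
From HB Require Import structures.
From mathcomp Require Import all_boot all_order all_algebra.
Set Implicit Arguments. Unset Strict Implicit. Unset Printing Implicit Defensive.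
Import GRing.Theory.
Local Open Scope ring_scope.

Section JacobsonDefs.
Variables (K : fieldType) (A : algType K) (n : nat).

Definition jacobson_relations (B : algType K) (x y : 'I_n -> B) : Prop :=
  (forall i, y i * x i = 1) /\
  (forall i j, i != j ->
     [/\ x i * y j = y j * x i, x i * x j = x j * x i & y i * y j = y j * y i]).

Definition is_jacobson_presentation (x y : 'I_n -> A) : Prop :=
  jacobson_relations x y /\
  forall (B : algType K) (bx bY : 'I_n -> B), jacobson_relations bx bY ->
    (exists f : {lrmorphism A -> B}, forall i, f (x i) = bx i /\ f (y i) = bY i) /\
    (forall f g : {lrmorphism A -> B},
        (forall i, f (x i) = g (x i) /\ f (y i) = g (y i)) -> forall a, f a = g a).

Definition inspan (S : A -> Prop) (v : A) : Prop :=
  exists (m : nat) (c : 'I_m -> K) (s : 'I_m -> A),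
    (forall j, S (s j)) /\ v = \sum_(j < m) c j *: s j.

(* Two-sided ideals, left and right ideals (= left/right submodules of A). *)
Definition is_left_ideal (I : A -> Prop) : Prop :=
  [/\ I 0, (forall u v, I u -> I v -> I (u + v)) & (forall a u, I u -> I (a * u))].
Definition is_right_ideal (I : A -> Prop) : Prop :=
  [/\ I 0, (forall u v, I u -> I v -> I (u + v)) & (forall a u, I u -> I (u * a))].
Definition is_ideal (I : A -> Prop) : Prop := is_left_ideal I /\ is_right_ideal I.

Definition nonzero_set (I : A -> Prop) : Prop := exists v, I v /\ v <> 0.
Definition subset_of (I J : A -> Prop) : Prop := forall v, I v -> J v.
Definition same_set (I J : A -> Prop) : Prop := forall v, I v <-> J v.

Definition essential_left (I : A -> Prop) : Prop :=
  is_left_ideal I /\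
  forall L, is_left_ideal L -> nonzero_set L -> nonzero_set (fun v => L v /\ I v).
Definition essential_right (I : A -> Prop) : Prop :=
  is_right_ideal I /\
  forall L, is_right_ideal L -> nonzero_set L -> nonzero_set (fun v => L v /\ I v).

Definition simple_left (L : A -> Prop) : Prop :=
  is_left_ideal L /\ nonzero_set L /\
  forall L', is_left_ideal L' -> subset_of L' L ->
    (forall v, L' v -> v = 0) \/ same_set L' L.
Definition simple_right (L : A -> Prop) : Prop :=
  is_right_ideal L /\ nonzero_set L /\
  forall L', is_right_ideal L' -> subset_of L' L ->
    (forall v, L' v -> v = 0) \/ same_set L' L.
Definition simple_bimodule (L : A -> Prop) : Prop :=
  is_ideal L /\ nonzero_set L /\
  forall L', is_ideal L' -> subset_of L' L ->
    (forall v, L' v -> v = 0) \/ same_set L' L.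

Definition left_socle : A -> Prop :=
  inspan (fun w => exists L, simple_left L /\ L w).
Definition right_socle : A -> Prop :=
  inspan (fun w => exists L, simple_right L /\ L w).
Definition bimodule_socle : A -> Prop :=
  inspan (fun w => exists L, simple_bimodule L /\ L w).

Definition set_prod (I J : A -> Prop) : A -> Prop :=
  inspan (fun w => exists u v, I u /\ J v /\ w = u * v).

Definition prime_algebra : Prop :=
  forall I J, is_ideal I -> is_ideal J ->
    (forall u v, I u -> J v -> u * v = 0) ->
    (forall u, I u -> u = 0) \/ (forall v, J v -> v = 0).

Definition center_is_scalars : Prop :=
  forall a : A, (forall b : A, a * b = b * a) <-> exists c : K, a = c%:A.

Definition Fgen (x y : 'I_n -> A) (i : 'I_n) (k l : nat) : A :=
  x i ^+ k * y i ^+ l - x i ^+ k.+1 * y i ^+ l.+1.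
Definition Fi (x y : 'I_n -> A) (i : 'I_n) : A -> Prop :=
  inspan (fun w => exists k l, w = Fgen x y i k l).
(* F_n = F(1) ⊗ ... ⊗ F(n) inside S_n: the span of products of elements of the F(i). *)
Definition Fn (x y : 'I_n -> A) : A -> Prop :=
  inspan (fun w => exists f : 'I_n -> A, (forall i, Fi x y i (f i)) /\
                   w = \prod_(i < n) f i).

End JacobsonDefs.

From HB Require Import structures.
From mathcomp Require Import all_boot all_order all_algebra.
From mathcomp Require Import boolp.
From mathcomp Require functions.
Set Implicit Arguments.
Unset Strict Implicit.
Unset Printing Implicit Defensive.
Import GRing.Theory.
Local Open Scope ring_scope.

(* Write X^a = prod_i x_i^(a_i), Y^b = prod_i y_i^(b_i) and
   e = prod_i (1 - x_i y_i).  Everything rests on three facts: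
   (a) the monomials X^a Y^b span S_n: their span is a subalgebra containing
       the generators, so by uniqueness in the universal property it is S_n;
   (b) e <> 0: S_n maps to the linear operators on K-valued functions of
       exponent vectors, x_i and y_i shifting the i-th exponent, and there e
       is a nonzero projection;
   (c) the X^a e Y^b are matrix units: e Y^g X^d e = [g = d] e.
   By (a) and (c) every "corner" e Y^g v X^d e is a scalar multiple of e, and
   the corners separate the elements of S_n (look at a term of minimal degree
   in an expansion of v).  Hence every nonzero ideal contains e, so F_n, the
   span of the matrix units, is the smallest nonzero ideal; with general facts
   on essential and simple submodules and socles, all parts follow. *)

Section LinearSpan.
Variables (K : fieldType) (A : algType K).
Implicit Types (S T : A -> Prop) (u v : A).

Lemma inspan0 S : inspan S 0.
Proof. by exists 0%N, (fun _ => 0), (fun _ => 0); split; [case|rewrite big_ord0]. Qed.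

Lemma inspan_gen S v : S v -> inspan S v.
Proof.
by move=> Sv; exists 1%N, (fun _ => 1), (fun _ => v); rewrite big_ord1 scale1r.
Qed.

Lemma inspanD S u v : inspan S u -> inspan S v -> inspan S (u + v).
Proof.
move=> [m1 [c1 [s1 [h1 ->]]]] [m2 [c2 [s2 [h2 ->]]]].
pose pick U (f1 : 'I_m1 -> U) (f2 : 'I_m2 -> U) (j : 'I_(m1 + m2)) :=
  match split j with inl k => f1 k | inr k => f2 k end.
exists (m1 + m2)%N, (pick _ c1 c2), (pick _ s1 s2); split.
  by move=> j; rewrite /pick; case: split.
by rewrite big_split_ord /pick; congr (_ + _); apply: eq_bigr => j _;
  rewrite (unsplitK (inl _)) || rewrite (unsplitK (inr _)).
Qed.

Lemma inspanZ S c v : inspan S v -> inspan S (c *: v).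
Proof.
move=> [m [c1 [s [hs ->]]]]; exists m, (fun j => c * c1 j), s; split=> //.
by rewrite scaler_sumr; apply: eq_bigr => j _; rewrite scalerA.
Qed.

Lemma inspan_linear S T (g : A -> A) v : linear g ->
  (forall s, S s -> inspan T (g s)) -> inspan S v -> inspan T (g v).
Proof.
move=> lin_g hS [m [c [s [hs ->]]]].
have g0 : g 0 = 0 by have := lin_g (-1) 0 0; rewrite !scaleN1r oppr0 addr0 addNr.
elim/big_rec: _ => [|j w _ hw]; first by rewrite g0; apply: inspan0.
by rewrite lin_g; apply: inspanD => //; apply/inspanZ/hS.
Qed.

Lemma inspan_mono S T v : (forall s, S s -> inspan T s) -> inspan S v -> inspan T v.
Proof. exact: (@inspan_linear S T id). Qed.

Lemma inspan_mul S T (R : A -> Prop) u v :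
  (forall s t, S s -> T t -> inspan R (s * t)) ->
  inspan S u -> inspan T v -> inspan R (u * v).
Proof.
move=> hST hu hv.
apply: (@inspan_linear S R (fun s => s * v)) hu => [a s s'|s Ss].
  by rewrite mulrDl scalerAl.
by apply: (@inspan_linear T R (fun t => s * t)) hv => [a t t'|t Tt];
  [rewrite mulrDr scalerAr|apply: hST].
Qed.

Lemma inspan_prod (I : eqType) (S : I -> A -> Prop) (f : I -> A) (s : seq I) :
  uniq s -> (forall i, inspan (S i) (f i)) ->
  inspan (fun w => exists g, (forall i, i \in s -> S i (g i)) /\ w = \prod_(i <- s) g i)
         (\prod_(i <- s) f i).
Proof.
move=> + spanf; elim: s => [_|i s IH /= /andP [i_notin_s /IH {}IH]].
  by apply: inspan_gen; exists f; rewrite big_nil.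
rewrite big_cons; apply: inspan_mul (spanf i) IH => u _ Su [g [Sg ->]].
apply: inspan_gen; exists (fun j => if j == i then u else g j); split.
  by move=> j; rewrite inE; case: eqP => [->|_ /Sg].
rewrite big_cons eqxx; congr (_ * _); apply: eq_big_seq => j j_in_s.
by case: eqP j_in_s => // ->; rewrite (negbTE i_notin_s).
Qed.

Lemma left_ideal_span S (I : A -> Prop) v :
  is_left_ideal I -> (forall s, S s -> I s) -> inspan S v -> I v.
Proof.
move=> [I0 ID IM] hS [m [c [s [hs ->]]]].
by elim/big_rec: _ => // j w _ Iw; apply: ID => //; rewrite -mulr_algl; apply/IM/hS.
Qed.

Lemma inspan_single w v : inspan (eq^~ w) v -> exists c, v = c *: w.
Proof.
move=> [m [c [s [hs ->]]]]; exists (\sum_(j < m) c j).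
by rewrite scaler_suml; apply: eq_bigr => j _; rewrite hs.
Qed.

End LinearSpan.

Section CommutingProducts.
Variables (R : pzRingType) (I : eqType).
Implicit Types (F G : I -> R) (s : seq I).

Lemma prod_mul_offdiag F G s : uniq s ->
  (forall i j, i != j -> GRing.comm (G i) (F j)) ->
  \prod_(i <- s) (F i * G i) = \prod_(i <- s) F i * \prod_(i <- s) G i.
Proof.
move=> uniq_s hGF; elim: s uniq_s => [|i s IH] /=; first by rewrite !big_nil mulr1.
case/andP=> i_notin_s uniq_s; rewrite !big_cons IH // -!mulrA; congr (_ * _).
have comm_Gi : GRing.comm (G i) (\prod_(j <- s) F j).
  rewrite big_seq; apply: commr_prod => j j_in_s; apply: hGF.
  by apply: contraNneq i_notin_s => ->.
by rewrite !mulrA comm_Gi.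
Qed.

Lemma prod_eq0 F s j : j \in s -> F j = 0 -> \prod_(i <- s) F i = 0.
Proof.
move=> + Fj0; elim: s => [|k s IH] //; rewrite inE big_cons => /orP [/eqP Ejk|j_in_s].
  by rewrite -Ejk Fj0 mul0r.
by rewrite IH // mulr0.
Qed.

Lemma prod_single F s j : uniq s -> j \in s ->
  (forall i, i != j -> F i = 1) -> \prod_(i <- s) F i = F j.
Proof.
move=> + + F1; elim: s => [|k s IH] //= /andP [k_notin_s uniq_s].
rewrite inE big_cons => /orP [/eqP Ejk|j_in_s].
  subst k; rewrite big1_seq ?mulr1 // => i /andP [_ i_in_s]; apply: F1.
  by apply: contraNneq k_notin_s => <-.
rewrite IH // F1 ?mul1r //; by apply: contraNneq k_notin_s => ->.
Qed.

End CommutingProducts.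

Lemma commrXX (R : pzRingType) (u v : R) a b :
  GRing.comm u v -> GRing.comm (u ^+ a) (v ^+ b).
Proof. by move=> uv; apply/commr_sym/commrX/commr_sym/commrX. Qed.

(* The linear endomorphisms of a nonzero module V over a commutative ring form
   an algebra under composition; it is the target of the model of S_n used to
   show that S_n is not degenerate.  The type is indexed by a proof that V is
   nonzero, so that its (nontrivial) ring structure can be canonical. *)
Section EndomorphismAlgebra.
Variables (R : comNzRingType) (V : lmodType R) (v0 : V).

Record endo_of (v0_neq0 : v0 != 0) :=
  Endo { endo_fun :> V -> V; endo_linear : linear endo_fun }.
Arguments Endo {v0_neq0 endo_fun}.

Variable v0_neq0 : v0 != 0.
Local Notation endo := (endo_of v0_neq0).

Lemma endo_ext (f g : endo) : f =1 g -> f = g.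
Proof.
case: f g => f lin_f [g lin_g] /= /funext fg; case: _ / fg in lin_g *.
by rewrite (Prop_irrelevance lin_f lin_g).
Qed.

HB.instance Definition _ := gen_eqMixin endo.
HB.instance Definition _ := gen_choiceMixin endo.

Lemma endo0 (f : endo) : f 0 = 0.
Proof. by have := endo_linear f (-1) 0 0; rewrite !scaleN1r oppr0 addr0 addNr. Qed.

Lemma endoD (f : endo) u v : f (u + v) = f u + f v.
Proof. by have := endo_linear f 1 u v; rewrite !scale1r. Qed.

Lemma endoZ (f : endo) a u : f (a *: u) = a *: f u.
Proof. by have := endo_linear f a u 0; rewrite !addr0 endo0 addr0. Qed.

Lemma linear_zero : linear (fun _ : V => 0 : V).
Proof. by move=> a u v; rewrite scaler0 addr0. Qed.
Lemma linear_opp (f : endo) : linear (fun u => - f u).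
Proof. by move=> a u v; rewrite endo_linear scalerN opprD. Qed.
Lemma linear_add (f g : endo) : linear (fun u => f u + g u).
Proof. by move=> a u v; rewrite !endo_linear scalerDr addrACA. Qed.
Lemma linear_id : linear (fun u : V => u).
Proof. by []. Qed.
Lemma linear_comp (f g : endo) : linear (fun u => f (g u)).
Proof. by move=> a u v; rewrite !endo_linear. Qed.
Lemma linear_scale a (f : endo) : linear (fun u => a *: f u).
Proof. by move=> b u v; rewrite endo_linear scalerDr !scalerA mulrC. Qed.

Definition endo_zero : endo := Endo linear_zero.
Definition endo_opp f : endo := Endo (linear_opp f).
Definition endo_add f g : endo := Endo (linear_add f g).
Definition endo_one : endo := Endo linear_id.
Definition endo_comp f g : endo := Endo (linear_comp f g).
Definition endo_scale a f : endo := Endo (linear_scale a f).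

Lemma endo_addA : associative endo_add.
Proof. by move=> f g h; apply: endo_ext => u /=; rewrite addrA. Qed.
Lemma endo_addC : commutative endo_add.
Proof. by move=> f g; apply: endo_ext => u /=; rewrite addrC. Qed.
Lemma endo_add0 : left_id endo_zero endo_add.
Proof. by move=> f; apply: endo_ext => u /=; rewrite add0r. Qed.
Lemma endo_addN : left_inverse endo_zero endo_opp endo_add.
Proof. by move=> f; apply: endo_ext => u /=; rewrite addNr. Qed.
HB.instance Definition _ :=
  GRing.isZmodule.Build endo endo_addA endo_addC endo_add0 endo_addN.

Lemma endo_compA : associative endo_comp.
Proof. by move=> f g h; apply: endo_ext. Qed.
Lemma endo_comp1 : left_id endo_one endo_comp.
Proof. by move=> f; apply: endo_ext. Qed.
Lemma endo_compr1 : right_id endo_one endo_comp.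
Proof. by move=> f; apply: endo_ext. Qed.
Lemma endo_compDl : left_distributive endo_comp +%R.
Proof. by move=> f g h; apply: endo_ext. Qed.
Lemma endo_compDr : right_distributive endo_comp +%R.
Proof. by move=> f g h; apply: endo_ext => u /=; rewrite endoD. Qed.
Lemma endo_one_neq0 : endo_one != 0.
Proof. by apply/eqP => /(congr1 (fun f : endo => f v0)) /= /eqP; apply/negP. Qed.
HB.instance Definition _ := GRing.Zmodule_isNzRing.Build endo
  endo_compA endo_comp1 endo_compr1 endo_compDl endo_compDr endo_one_neq0.

Lemma endo_scaleA a b f : endo_scale a (endo_scale b f) = endo_scale (a * b) f.
Proof. by apply: endo_ext => u /=; rewrite scalerA. Qed.
Lemma endo_scale1 : left_id 1 endo_scale.
Proof. by move=> f; apply: endo_ext => u /=; rewrite scale1r. Qed.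
Lemma endo_scaleDr : right_distributive endo_scale +%R.
Proof. by move=> a f g; apply: endo_ext => u /=; rewrite scalerDr. Qed.
Lemma endo_scaleDl f : {morph endo_scale^~ f : a b / a + b}.
Proof. by move=> a b; apply: endo_ext => u /=; rewrite scalerDl. Qed.
HB.instance Definition _ := GRing.Zmodule_isLmodule.Build R endo
  endo_scaleA endo_scale1 endo_scaleDr endo_scaleDl.

Lemma endo_scaleAl a (f g : endo) : a *: (f * g) = (a *: f) * g.
Proof. exact: endo_ext. Qed.
HB.instance Definition _ := GRing.Lmodule_isLalgebra.Build R endo endo_scaleAl.
Lemma endo_scaleAr a (f g : endo) : a *: (f * g) = f * (a *: g).
Proof. by apply: endo_ext => u /=; rewrite endoZ. Qed.
HB.instance Definition _ := GRing.Lalgebra_isAlgebra.Build R endo endo_scaleAr.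

Lemma endo_mulE (f g : endo) u : (f * g) u = f (g u). Proof. by []. Qed.
Lemma endo_subE (f g : endo) u : (f - g) u = f u - g u. Proof. by []. Qed.
Lemma endo_oneE u : (1 : endo) u = u. Proof. by []. Qed.

End EndomorphismAlgebra.
Arguments Endo {R V v0 v0_neq0 endo_fun}.

(* A subset of an algebra closed under the algebra operations is an algebra;
   the type is indexed by the closure proof so that its structure is canonical. *)
Section SubAlgebra.
Variables (K : fieldType) (A : algType K) (P : pred A).

Record subalg (P_closed : GRing.subsemialg_closed P) :=
  SubAlg { subalg_val : A; subalg_valP : P subalg_val }.

Variable P_closed : GRing.subsemialg_closed P.
Local Notation S := (subalg P_closed).

HB.instance Definition _ := [isSub of S for @subalg_val P_closed].
HB.instance Definition _ := [Choice of S by <:].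
HB.instance Definition _ := GRing.SubChoice_isSubAlgebra.Build K A P S P_closed.
HB.instance Definition _ := GRing.RMorphism.on (val : S -> A).

End SubAlgebra.

Section Ideals.
Variables (K : fieldType) (A : algType K).
Implicit Types (I J L : A -> Prop).

Lemma zero_or_nonzero L : (forall v, L v -> v = 0) \/ nonzero_set L.
Proof.
case: (EM (nonzero_set L)) => [|zeroL]; [by right|left => v Lv].
by apply/eqP/negPn/negP => v_neq0; apply: zeroL; exists v; split=> //; apply/eqP.
Qed.

Lemma left_idealI I J : is_left_ideal I -> is_left_ideal J ->
  is_left_ideal (fun v => I v /\ J v).
Proof.
move=> [I0 ID IM] [J0 JD JM]; split=> // [u v [Iu Ju] [Iv Jv]|a u [Iu Ju]].
  by split; [apply: ID|apply: JD].
by split; [apply: IM|apply: JM].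
Qed.

Lemma right_idealI I J : is_right_ideal I -> is_right_ideal J ->
  is_right_ideal (fun v => I v /\ J v).
Proof.
move=> [I0 ID IM] [J0 JD JM]; split=> // [u v [Iu Ju] [Iv Jv]|a u [Iu Ju]].
  by split; [apply: ID|apply: JD].
by split; [apply: IM|apply: JM].
Qed.

(* A simple submodule meets an essential submodule, hence lies inside it. *)
Lemma simple_left_sub I L : essential_left I -> simple_left L -> subset_of L I.
Proof.
move=> [idI essI] [idL [nzL minL]].
have [zero|same] := minL _ (left_idealI idL idI) (fun v => @proj1 _ _).
  by have [v [[Lv Iv] /(_ (zero v (conj Lv Iv)))]] := essI _ idL nzL.
by move=> v /same [].
Qed.

Lemma simple_right_sub I L : essential_right I -> simple_right L -> subset_of L I.
Proof.
move=> [idI essI] [idL [nzL minL]].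
have [zero|same] := minL _ (right_idealI idL idI) (fun v => @proj1 _ _).
  by have [v [[Lv Iv] /(_ (zero v (conj Lv Iv)))]] := essI _ idL nzL.
by move=> v /same [].
Qed.

Lemma simple_bimodule_sub I L : is_ideal I -> nonzero_set I ->
  (forall J, is_ideal J -> nonzero_set J -> subset_of I J) ->
  simple_bimodule L -> subset_of L I.
Proof.
move=> idI [v [Iv v_neq0]] minI [idL [nzL minL]].
have [zero|same] := minL _ idI (minI _ idL nzL); first by case: v_neq0; apply: zero.
by move=> w /same.
Qed.

Lemma socle_eq (simple : (A -> Prop) -> Prop) I : is_left_ideal I ->
  (forall L, simple L -> subset_of L I) ->
  (forall v, I v -> inspan (fun w => exists L, simple L /\ L w) v) ->
  same_set (inspan (fun w => exists L, simple L /\ L w)) I.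
Proof.
move=> idI simple_sub spanI v; split=> [|/spanI //].
by apply: left_ideal_span idI _ => w [L [simL Lw]]; apply: simple_sub simL _ Lw.
Qed.

End Ideals.

(* With X^a = prod x_i^(a_i), Y^b = prod y_i^(b_i) and the idempotent
   e = prod (1 - x_i y_i), the elements X^a e Y^b behave like matrix units. *)
Section JacobsonAlgebra.
Variables (K : fieldType) (A : algType K) (n : nat) (x y : 'I_n -> A).
Hypothesis rel : jacobson_relations x y.

Local Notation exps := ('I_n -> nat).

Lemma y_x i : y i * x i = 1. Proof. exact: (proj1 rel). Qed.

Lemma comm_xx i j : GRing.comm (x i) (x j).
Proof. by have [->|/(proj2 rel) []] := eqVneq i j. Qed.
Lemma comm_yy i j : GRing.comm (y i) (y j).
Proof. by have [->|/(proj2 rel) []] := eqVneq i j. Qed.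
Lemma comm_xy i j : i != j -> GRing.comm (x i) (y j).
Proof. by move=> /(proj2 rel) []. Qed.
Lemma comm_yx i j : i != j -> GRing.comm (y i) (x j).
Proof. by rewrite eq_sym => /comm_xy /commr_sym. Qed.

Definition ei i := 1 - x i * y i.
Definition e := \prod_(i < n) ei i.

Lemma comm_x_ei i j : i != j -> GRing.comm (x i) (ei j).
Proof.
by move=> ij; apply: commrB (commr1 _) (commrM (comm_xx _ _) (comm_xy ij)).
Qed.
Lemma comm_y_ei i j : i != j -> GRing.comm (y i) (ei j).
Proof.
by move=> ij; apply: commrB (commr1 _) (commrM (comm_yx ij) (comm_yy _ _)).
Qed.

Lemma ei_x i : ei i * x i = 0.
Proof. by rewrite mulrBl mul1r -mulrA y_x mulr1 subrr. Qed.
Lemma y_ei i : y i * ei i = 0.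
Proof. by rewrite mulrBr mulr1 mulrA y_x mul1r subrr. Qed.
Lemma ei_idem i : ei i * ei i = ei i.
Proof. by rewrite {2}/ei mulrBr mulr1 mulrA ei_x mul0r subr0. Qed.

Lemma ei_xX i k : ei i * x i ^+ k = if k == 0%N then ei i else 0.
Proof. by case: k => [|k]; rewrite ?mulr1 // exprS mulrA ei_x mul0r. Qed.
Lemma yX_ei i k : y i ^+ k * ei i = if k == 0%N then ei i else 0.
Proof. by case: k => [|k]; rewrite ?mul1r // exprSr -mulrA y_ei mulr0. Qed.

Lemma yX_xX i a b : y i ^+ a * x i ^+ b = x i ^+ (b - a) * y i ^+ (a - b).
Proof.
elim: a b => [|a IH] [|b]; rewrite ?subn0 ?sub0n ?mulr1 ?mul1r //.
by rewrite exprSr exprS mulrA -(mulrA _ (y i)) y_x mulr1 IH !subSS.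
Qed.

Lemma prod_mul (F G : 'I_n -> A) : (forall i j, i != j -> GRing.comm (G i) (F j)) ->
  \prod_(i < n) (F i * G i) = \prod_(i < n) F i * \prod_(i < n) G i.
Proof. exact/prod_mul_offdiag/index_enum_uniq. Qed.

Definition xpow (a : exps) := \prod_(i < n) x i ^+ a i.
Definition ypow (b : exps) := \prod_(i < n) y i ^+ b i.
Definition mon (a b : exps) := xpow a * ypow b.
Definition munit (a b : exps) := xpow a * e * ypow b.
Definition zero_exps (a : exps) := [forall i, a i == 0%N].

Lemma xpow0 : xpow (fun _ => 0%N) = 1.
Proof. by rewrite /xpow big1. Qed.
Lemma ypow0 : ypow (fun _ => 0%N) = 1.
Proof. by rewrite /ypow big1. Qed.

Lemma xpowD a b : xpow (fun i => a i + b i)%N = xpow a * xpow b.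
Proof.
by rewrite /xpow -prod_mul => [|i j _]; [under eq_bigr do rewrite exprD|apply/commrXX/comm_xx].
Qed.
Lemma ypowD a b : ypow (fun i => a i + b i)%N = ypow a * ypow b.
Proof.
by rewrite /ypow -prod_mul => [|i j _]; [under eq_bigr do rewrite exprD|apply/commrXX/comm_yy].
Qed.

Lemma ypow_xpow b a :
  ypow b * xpow a = xpow (fun i => a i - b i)%N * ypow (fun i => b i - a i)%N.
Proof.
rewrite /xpow /ypow -prod_mul => [|i j ij]; last exact: commrXX (comm_xy ij).
rewrite -prod_mul => [|i j ij]; last exact: commrXX (comm_yx ij).
by apply: eq_bigr => i _; apply: yX_xX.
Qed.

Lemma x_xpow j : x j = xpow (fun i => (i == j : nat)).
Proof.
rewrite /xpow (prod_single (j:=j)) ?index_enum_uniq ?mem_index_enum ?eqxx //.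
by move=> i /negbTE ->.
Qed.
Lemma y_ypow j : y j = ypow (fun i => (i == j : nat)).
Proof.
rewrite /ypow (prod_single (j:=j)) ?index_enum_uniq ?mem_index_enum ?eqxx //.
by move=> i /negbTE ->.
Qed.

Lemma e_xpow a : e * xpow a = if zero_exps a then e else 0.
Proof.
rewrite /e /xpow -prod_mul => [|i j ij]; last first.
  exact: commr_sym (commrX _ (commr_sym (comm_x_ei ij))).
case: (boolP (zero_exps a)) => [/forallP a0|/forallPn [j aj]].
  by apply: eq_bigr => i _; rewrite ei_xX a0.
by apply: (prod_eq0 (j:=j)); rewrite ?mem_index_enum // ei_xX (negbTE aj).
Qed.
Lemma ypow_e a : ypow a * e = if zero_exps a then e else 0.
Proof.
rewrite /e /ypow -prod_mul => [|i j ij]; last first.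
  by apply/commrX/commr_sym/comm_y_ei; rewrite eq_sym.
case: (boolP (zero_exps a)) => [/forallP a0|/forallPn [j aj]].
  by apply: eq_bigr => i _; rewrite yX_ei a0.
by apply: (prod_eq0 (j:=j)); rewrite ?mem_index_enum // yX_ei (negbTE aj).
Qed.

Lemma e_idem : e * e = e.
Proof.
rewrite /e -prod_mul => [|i j ij]; first by apply: eq_bigr => i _; apply: ei_idem.
rewrite /ei; apply: commrB (commr1 _) (commrM _ _); apply: commr_sym;
  [apply: comm_x_ei|apply: comm_y_ei]; by rewrite eq_sym.
Qed.

Lemma mon_mul a b c d :
  mon a b * mon c d = mon (fun i => a i + (c i - b i))%N (fun i => (b i - c i) + d i)%N.
Proof.
by rewrite /mon xpowD ypowD -!mulrA; congr (_ * _); rewrite !mulrA ypow_xpow -!mulrA.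
Qed.

Lemma e_ypow_xpow_e g d : e * ypow g * xpow d * e = if [forall i, g i == d i] then e else 0.
Proof.
have -> : [forall i, g i == d i] =
    zero_exps (fun i => d i - g i)%N && zero_exps (fun i => g i - d i)%N.
  apply/forallP/andP => [gd|[/forallP dg /forallP gd] i].
    by split; apply/forallP => i; rewrite (eqP (gd i)) subnn.
  by rewrite eqn_leq -!subn_eq0 dg gd.
rewrite -(mulrA e) ypow_xpow mulrA e_xpow -mulrA ypow_e.
by case: (zero_exps _); case: (zero_exps _); rewrite ?mulr0 ?mul0r ?e_idem.
Qed.

Definition monomial v := exists a b, v = mon a b.

(* The corner map v |-> e Y^g v X^d e, and the condition under which it does
   not kill the monomial X^a Y^b. *)
Definition corner (g d : exps) v := e * ypow g * v * xpow d * e.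
Definition detects (g d a b : exps) :=
  [forall i, a i <= g i]%N && [forall i, g i - a i + b i == d i]%N.

Lemma corner_linear g d : linear (corner g d).
Proof. by move=> c u v; rewrite /corner mulrDr !mulrDl -scalerAr -!scalerAl. Qed.

Lemma corner_sum g d m (c : 'I_m -> K) (u : 'I_m -> A) (J : {set 'I_m}) :
  corner g d (\sum_(j in J) c j *: u j) = \sum_(j in J) c j *: corner g d (u j).
Proof.
by rewrite /corner mulr_sumr !mulr_suml; apply: eq_bigr => j _; rewrite -scalerAr -!scalerAl.
Qed.

Lemma corner_mon g d a b : corner g d (mon a b) = if detects g d a b then e else 0.
Proof.
rewrite /corner /mon /detects !mulrA -(mulrA e) ypow_xpow mulrA e_xpow.
have -> : zero_exps (fun i => a i - g i)%N = [forall i, a i <= g i]%N.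
  by apply: eq_forallb => i; rewrite subn_eq0.
case: ifP => _ /=; last by rewrite !mul0r.
by rewrite -(mulrA e) -ypowD e_ypow_xpow_e.
Qed.

Lemma detects_min g d a b :
  detects g d a b -> (\sum_i g i <= \sum_i a i)%N -> a = g /\ b = d.
Proof.
case/andP=> /forallP ag /forallP gabd deg_g.
have deg_split : (\sum_i g i = \sum_i (g i - a i) + \sum_i a i)%N.
  by rewrite -big_split; apply: eq_bigr => j _ /=; rewrite subnK.
have ag_eq : a =1 g.
  move=> i; apply/eqP; rewrite eqn_leq ag -subn_eq0 /=.
  move: deg_g; rewrite deg_split -[X in (_ <= X)%N]add0n leq_add2r leqn0 sum_nat_eq0.
  by move=> /forallP /(_ i).
have ga := funext ag_eq; split=> //; apply: funext => i.
by have := gabd i; rewrite ga subnn add0n => /eqP.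
Qed.

Hypothesis monomials_span : forall v, inspan monomial v.
Hypothesis e_neq0 : e != 0.

Lemma corner_scalar g d v : exists c, corner g d v = c *: e.
Proof.
apply/inspan_single/(inspan_linear (corner_linear g d)); last exact: monomials_span.
move=> _ [a [b ->]]; rewrite corner_mon.
by case: ifP => _; [apply: inspan_gen|apply: inspan0].
Qed.

(* A linear combination of monomials with vanishing corners vanishes: the
   corner at the exponents of a term of minimal x-degree isolates the terms
   equal to that one, so these cancel and we conclude by induction. *)
Lemma comb_vanishing m (c : 'I_m -> K) (al be : 'I_m -> exps) (J : {set 'I_m}) :
  (forall g d, corner g d (\sum_(j in J) c j *: mon (al j) (be j)) = 0) ->
  \sum_(j in J) c j *: mon (al j) (be j) = 0.
Proof.
elim: {J}_.+1 {-2}J (ltnSn #|J|) => // N IH J cardJ vanish.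
have [->|[j1 j1J]] := set_0Vmem J; first by rewrite big_set0.
case: (@arg_minnP _ j1 (fun j => j \in J) (fun j => \sum_i al j i)%N j1J) => j0 j0J min_j0.
pose P j := detects (al j0) (be j0) (al j) (be j).
have P_eq j : j \in J -> P j -> mon (al j) (be j) = mon (al j0) (be j0).
  by move=> jJ /detects_min /(_ (min_j0 j jJ)) [-> ->].
have coefs0 : \sum_(j in J | P j) c j = 0.
  suff : (\sum_(j in J | P j) c j) *: e = 0.
    by move/eqP; rewrite scaler_eq0 (negbTE e_neq0) orbF => /eqP.
  rewrite scaler_suml -[RHS](vanish (al j0) (be j0)) corner_sum big_mkcond [RHS]big_mkcond /=.
  apply: eq_bigr => j _; rewrite corner_mon /P.
  by case: (j \in J) => //=; case: (detects _ _ _ _); rewrite ?scaler0.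
set J' := [set j in J | ~~ P j].
have sumJ : \sum_(j in J) c j *: mon (al j) (be j) = \sum_(j in J') c j *: mon (al j) (be j).
  rewrite [LHS](bigID P) /=.
  have -> : \sum_(j in J | P j) c j *: mon (al j) (be j) = 0.
    rewrite (eq_bigr (fun j => c j *: mon (al j0) (be j0))) => [|j /andP [jJ Pj]].
      by rewrite -scaler_suml coefs0 scale0r.
    by rewrite P_eq.
  by rewrite add0r; apply: eq_bigl => j; rewrite inE.
rewrite sumJ in vanish *; apply: IH vanish; rewrite -ltnS; apply: leq_trans cardJ.
apply/proper_card/properP; split; first by apply/subsetP => j; rewrite inE => /andP [].
have P_j0 : P j0 by apply/andP; split; apply/forallP => i; rewrite ?subnn ?add0n.
by exists j0; rewrite // inE j0J P_j0.
Qed.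

Lemma corner_faithful v : (forall g d, corner g d v = 0) -> v = 0.
Proof.
have [m [c [s [s_mon ->]]]] := monomials_span v.
have [al hal] := fin_all_exists s_mon; have [be hbe] := fin_all_exists hal.
rewrite (eq_bigr (fun j => c j *: mon (al j) (be j))) => [|j _]; last by rewrite hbe.
have -> : \sum_(j < m) c j *: mon (al j) (be j) =
          \sum_(j in [set: 'I_m]) c j *: mon (al j) (be j).
  by apply: eq_bigl => j; rewrite in_setT.
exact: comb_vanishing.
Qed.

Lemma corner_nonzero v : v != 0 -> exists g d c, c != 0 /\ corner g d v = c *: e.
Proof.
move=> v_neq0; have [g [d nz]] : exists g d, corner g d v != 0.
  case: (EM (exists g d, corner g d v != 0)) => // none.
  case/eqP: v_neq0; apply: corner_faithful => g d.
  by apply/eqP/negPn/negP => nz; apply: none; exists g, d.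
have [c hc] := corner_scalar g d v.
by exists g, d, c; split=> //; apply: contraNneq nz => c0; rewrite hc c0 scale0r.
Qed.

Lemma e_corner v : exists c, e * v * e = c *: e.
Proof.
have [c] := corner_scalar (fun _ => 0%N) (fun _ => 0%N) v.
by rewrite /corner xpow0 ypow0 !mulr1; exists c.
Qed.

Lemma ideal_e (I : A -> Prop) : is_ideal I -> nonzero_set I -> I e.
Proof.
move=> [[_ _ IMl] [_ _ IMr]] [v [Iv /eqP v_neq0]].
have [g [d [c [c_neq0 corner_v]]]] := corner_nonzero v_neq0.
have -> : e = c^-1 *: corner g d v by rewrite corner_v scalerA mulVf // scale1r.
by rewrite -mulr_algl; apply: (IMl); apply: (IMr); apply: (IMr); apply: IMl.
Qed.

Definition munit_set v := exists a b, v = munit a b.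

Lemma Fgen_munit i k l : Fgen x y i k l = x i ^+ k * ei i * y i ^+ l.
Proof. by rewrite /Fgen mulrBr mulrBl mulr1 exprSr exprS !mulrA. Qed.

Lemma prod_Fgen a b : \prod_(i < n) Fgen x y i (a i) (b i) = munit a b.
Proof.
under eq_bigr do rewrite Fgen_munit.
rewrite prod_mul => [|i j ij]; last first.
  by apply: commrM; [apply/commrXX/comm_yx|apply/commr_sym/commrX/commr_sym/comm_y_ei].
rewrite prod_mul // => i j ij; apply/commrX/commr_sym/comm_x_ei; by rewrite eq_sym.
Qed.

Lemma Fn_munit : Fn x y = inspan munit_set.
Proof.
apply: funext => v; apply: propext; split.
  apply: inspan_mono => _ [f [Ff ->]].
  apply: inspan_mono (inspan_prod (S := fun i w => exists k l, w = Fgen x y i k l)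
    (index_enum_uniq _) Ff) => _ [g [Sg ->]].
  have Fg i : exists k l, g i = Fgen x y i k l := Sg i (mem_index_enum i).
  have [k hk] := fin_all_exists Fg.
  have [l hl] := fin_all_exists hk.
  by apply: inspan_gen; exists k, l; rewrite -prod_Fgen; apply: eq_bigr => i _; rewrite hl.
apply: inspan_mono => _ [a [b ->]]; apply: inspan_gen.
exists (fun i => Fgen x y i (a i) (b i)); split; last by rewrite prod_Fgen.
by move=> i; apply: inspan_gen; exists (a i), (b i).
Qed.

Lemma mon_munit a b c d : inspan munit_set (mon a b * munit c d).
Proof.
rewrite /mon /munit !mulrA -(mulrA (xpow a)) ypow_xpow mulrA -xpowD.
rewrite -(mulrA _ (ypow _)) ypow_e.
case: ifP => _; last by rewrite mulr0 mul0r; apply: inspan0.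
by apply: inspan_gen; do 2 eexists.
Qed.

Lemma munit_mon a b c d : inspan munit_set (munit c d * mon a b).
Proof.
rewrite /mon /munit !mulrA -(mulrA _ (ypow d)) ypow_xpow mulrA -(mulrA _ e) e_xpow.
case: ifP => _; last by rewrite mulr0 !mul0r; apply: inspan0.
by rewrite -mulrA -ypowD; apply: inspan_gen; do 2 eexists.
Qed.

Lemma Fn_ideal : is_ideal (Fn x y).
Proof.
rewrite Fn_munit; split; split; try exact: inspan0; try exact: inspanD.
  move=> a u Fu; apply: inspan_mul (monomials_span a) Fu => _ _ [? [? ->]] [? [? ->]].
  exact: mon_munit.
move=> a u Fu; apply: inspan_mul Fu (monomials_span a) => _ _ [? [? ->]] [? [? ->]].
exact: munit_mon.
Qed.

Lemma munit0 : munit (fun _ => 0%N) (fun _ => 0%N) = e.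
Proof. by rewrite /munit xpow0 ypow0 mul1r mulr1. Qed.

Lemma Fn_e : Fn x y e.
Proof. by rewrite Fn_munit -munit0; apply: inspan_gen; do 2 eexists. Qed.

Lemma Fn_nonzero : nonzero_set (Fn x y).
Proof. by exists e; split; [exact: Fn_e|apply/eqP]. Qed.

Lemma Fn_min (I : A -> Prop) : is_ideal I -> nonzero_set I -> subset_of (Fn x y) I.
Proof.
move=> idI nzI v; rewrite Fn_munit; apply: left_ideal_span (proj1 idI) _ => _ [a [b ->]].
have [[_ _ IMl] [_ _ IMr]] := idI.
by rewrite /munit; apply: IMr; apply: IMl; exact: ideal_e.
Qed.

Lemma Fn_mull a v : Fn x y v -> Fn x y (a * v).
Proof. by have [[_ _ IMl] _] := Fn_ideal; apply: IMl. Qed.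
Lemma Fn_mulr a v : Fn x y v -> Fn x y (v * a).
Proof. by have [_ [_ _ IMr]] := Fn_ideal; apply: IMr. Qed.

Lemma Fn_faithful a : a <> 0 ->
  (exists f, Fn x y f /\ f * a <> 0) /\ (exists f, Fn x y f /\ a * f <> 0).
Proof.
move/eqP/corner_nonzero => [g [d [c [c_neq0 corner_a]]]].
have corner_neq0 : corner g d a != 0 by rewrite corner_a scaler_eq0 negb_or c_neq0.
split; [exists (e * ypow g)|exists (xpow d * e)]; split; try apply/eqP.
- exact/Fn_mulr/Fn_e.
- by apply: contraNneq corner_neq0; rewrite /corner => ->; rewrite !mul0r.
- exact/Fn_mull/Fn_e.
- by apply: contraNneq corner_neq0; rewrite /corner -(mulrA _ (xpow d)) -(mulrA _ a) => ->;
    rewrite mulr0.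
Qed.

(* F_n^2 = F_n, since X^a e Y^b = (X^a e) (e Y^b). *)
Lemma Fn_idem : same_set (set_prod (Fn x y) (Fn x y)) (Fn x y).
Proof.
move=> v; split.
  by apply: left_ideal_span (proj1 Fn_ideal) _ => _ [u [w [_ [Fw ->]]]]; apply: Fn_mull.
rewrite {1}Fn_munit; apply: inspan_mono => _ [a [b ->]]; apply: inspan_gen.
exists (xpow a * e), (e * ypow b).
do 2 (split; first by [apply/Fn_mull/Fn_e|apply/Fn_mulr/Fn_e]).
by rewrite /munit [RHS]mulrA -(mulrA _ e e) e_idem.
Qed.

Lemma ideal_essential (I : A -> Prop) :
  is_ideal I -> nonzero_set I -> essential_left I /\ essential_right I.
Proof.
move=> idI nzI; split; split; try exact: (proj1 idI); try exact: (proj2 idI).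
  move=> L [_ _ LM] [v [Lv /Fn_faithful [[f [Ff fv]] _]]].
  by exists (f * v); split=> //; split; [apply: LM|apply: Fn_min => //; apply: Fn_mulr].
move=> L [_ _ LM] [v [Lv /Fn_faithful [_ [f [Ff vf]]]]].
by exists (v * f); split=> //; split; [apply: LM|apply: Fn_min => //; apply: Fn_mull].
Qed.

Lemma eY_neq0 d : e * ypow d != 0.
Proof.
apply: contraNneq e_neq0 => /(congr1 (fun w => w * xpow d * e)).
by rewrite !mul0r e_ypow_xpow_e (introT forallP (fun i => eqxx (d i))) => ->.
Qed.

Lemma Xe_neq0 d : xpow d * e != 0.
Proof.
apply: contraNneq e_neq0 => /(congr1 (fun w => e * ypow d * w)).
by rewrite mulr0 !mulrA e_ypow_xpow_e (introT forallP (fun i => eqxx (d i))) => ->.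
Qed.

(* The left ideal A e Y^d is simple: any nonzero v = a e Y^d in it has a
   nonzero corner, so e Y^g v is a nonzero multiple of e Y^d. *)
Lemma simple_left_eY d : simple_left (fun w => exists a, w = a * (e * ypow d)).
Proof.
split.
  split; first by exists 0; rewrite mul0r.
    by move=> _ _ [a ->] [b ->]; exists (a + b); rewrite mulrDl.
  by move=> c u [a ->]; exists (c * a); apply: mulrA.
split; first by exists (e * ypow d); split; [exists 1; rewrite mul1r|apply/eqP/eY_neq0].
move=> L [_ _ LM] sub; have [|[v [Lv /eqP v_neq0]]] := zero_or_nonzero L; [by left|right].
have [a va] := sub v Lv; have [g [d' [c [c_neq0 corner_v]]]] := corner_nonzero v_neq0.
have [c' eYa] := e_corner (ypow g * a).
have eYv : e * ypow g * v = c' *: (e * ypow d).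
  by rewrite va !mulrA -(mulrA e (ypow g) a) eYa -scalerAl.
have c'_neq0 : c' != 0.
  apply: contraNneq c_neq0 => c'0.
  have : c *: e = 0 by rewrite -corner_v /corner eYv c'0 !scale0r !mul0r.
  by move/eqP; rewrite scaler_eq0 (negbTE e_neq0) orbF.
move=> w; split; [exact: sub|move=> [b ->]].
have -> : b * (e * ypow d) = (c'^-1 *: (b * (e * ypow g))) * v.
  by rewrite -scalerAl -(mulrA b) eYv -scalerAr scalerA mulVf // scale1r.
exact: LM.
Qed.

Lemma simple_right_Xe d : simple_right (fun w => exists a, w = xpow d * e * a).
Proof.
split.
  split; first by exists 0; rewrite mulr0.
    by move=> _ _ [a ->] [b ->]; exists (a + b); rewrite mulrDr.
  by move=> c u [a ->]; exists (a * c); rewrite mulrA.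
split; first by exists (xpow d * e); split; [exists 1; rewrite mulr1|apply/eqP/Xe_neq0].
move=> L [_ _ LM] sub; have [|[v [Lv /eqP v_neq0]]] := zero_or_nonzero L; [by left|right].
have [a va] := sub v Lv; have [g [d' [c [c_neq0 corner_v]]]] := corner_nonzero v_neq0.
have [c' eaX] := e_corner (a * xpow d').
have vXe : v * (xpow d' * e) = c' *: (xpow d * e).
  by rewrite va !mulrA -(mulrA _ a) -(mulrA (xpow d)) -(mulrA _ _ e) eaX scalerAr.
have c'_neq0 : c' != 0.
  apply: contraNneq c_neq0 => c'0.
  have : c *: e = 0.
    by rewrite -corner_v /corner -!mulrA vXe c'0 !scale0r !mulr0.
  by move/eqP; rewrite scaler_eq0 (negbTE e_neq0) orbF.
move=> w; split; [exact: sub|move=> [b ->]].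
have -> : xpow d * e * b = v * (c'^-1 *: (xpow d' * e * b)).
  by rewrite -scalerAr (mulrA v) vXe -scalerAl scalerA mulVf // scale1r.
exact: LM.
Qed.

(* F_n is a simple bimodule, being the smallest nonzero ideal. *)
Lemma Fn_simple : simple_bimodule (Fn x y).
Proof.
split; first exact: Fn_ideal; split; first exact: Fn_nonzero.
move=> L idL sub; have [|nzL] := zero_or_nonzero L; [by left|right].
by move=> v; split; [exact: sub|exact: Fn_min].
Qed.

Lemma Fn_left_socle : same_set (left_socle (A:=A)) (Fn x y).
Proof.
apply: socle_eq (proj1 Fn_ideal) _ _ => [L|v].
  exact: simple_left_sub (proj1 (ideal_essential Fn_ideal Fn_nonzero)).
rewrite Fn_munit; apply: inspan_mono => _ [a [b ->]]; apply: inspan_gen.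
exists (fun w => exists c, w = c * (e * ypow b)); split; first exact: simple_left_eY.
by exists (xpow a); rewrite /munit mulrA.
Qed.

Lemma Fn_right_socle : same_set (right_socle (A:=A)) (Fn x y).
Proof.
apply: socle_eq (proj1 Fn_ideal) _ _ => [L|v].
  exact: simple_right_sub (proj2 (ideal_essential Fn_ideal Fn_nonzero)).
rewrite Fn_munit; apply: inspan_mono => _ [a [b ->]]; apply: inspan_gen.
exists (fun w => exists c, w = xpow a * e * c); split; first exact: simple_right_Xe.
by exists (ypow b).
Qed.

Lemma Fn_bimodule_socle : same_set (bimodule_socle (A:=A)) (Fn x y).
Proof.
apply: socle_eq (proj1 Fn_ideal) _ _ => [L|v Fv].
  exact: simple_bimodule_sub Fn_ideal Fn_nonzero Fn_min.
by apply: inspan_gen; exists (Fn x y); split; first exact: Fn_simple.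
Qed.

(* Any two nonzero ideals contain e = e * e, so their product is nonzero. *)
Lemma jacobson_prime : prime_algebra A.
Proof.
move=> I J idI idJ IJ0.
have [zeroI|nzI] := zero_or_nonzero I; first by left.
have [zeroJ|nzJ] := zero_or_nonzero J; first by right.
by case/eqP: e_neq0; rewrite -e_idem; apply: IJ0; apply: ideal_e.
Qed.

(* A central element a is the scalar c with e a e = c e: all corners of
   a - c vanish. *)
Lemma jacobson_center : center_is_scalars A.
Proof.
move=> a; split=> [central|[c ->] b]; last by rewrite mulr_algl mulr_algr.
have [c eae] := e_corner a; exists c; apply/eqP; rewrite -subr_eq0; apply/eqP.
set b := a - c%:A.
have central_b w : b * w = w * b by rewrite mulrBl mulrBr central mulr_algl mulr_algr.
have be0 : b * e = 0 by rewrite mulrBl mulr_algl -{1}e_idem mulrA central eae subrr.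
apply: corner_faithful => g d.
have -> : corner g d b = b * (e * ypow g * xpow d * e) by rewrite /corner -central_b !mulrA.
by rewrite e_ypow_xpow_e; case: ifP; rewrite ?mulr0.
Qed.

End JacobsonAlgebra.

(* A concrete model of the relations: x_i and y_i act on K-valued functions of
   exponent vectors a by shifting the i-th coordinate of a down and up.  There
   1 - x_i y_i is the projection onto functions supported on a_i = 0, so the
   image of e is nonzero. *)
Module ShiftModel.
Import functions.

Section Model.
Variables (K : fieldType) (n : nat).
Local Notation exps := ('I_n -> nat).
Local Notation V := (exps -> K^o).

Definition upd (a : exps) i k : exps := fun j => if j == i then k else a j.

Lemma upd_eq a i k : upd a i k i = k.
Proof. by rewrite /upd eqxx. Qed.
Lemma upd_neq a i k j : j != i -> upd a i k j = a j.
Proof. by rewrite /upd => /negbTE ->. Qed.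
Lemma upd_upd a i k l : upd (upd a i k) i l = upd a i l.
Proof. by apply: funext => j; rewrite /upd; case: (j == i). Qed.
Lemma upd_id a i : upd a i (a i) = a.
Proof. by apply: funext => j; rewrite /upd; case: eqP => // ->. Qed.
Lemma upd_comm a i j k l : i != j -> upd (upd a i k) j l = upd (upd a j l) i k.
Proof.
move=> ij; apply: funext => m; rewrite /upd.
by case: (eqVneq m j) => [->|//]; rewrite eq_sym (negbTE ij).
Qed.

Definition yf i (u : V) : V := fun a => u (upd a i (a i).+1).
Definition xf i (u : V) : V := fun a => if a i is k.+1 then u (upd a i k) else 0.

Lemma yf_linear i : linear (yf i).
Proof. by []. Qed.
Lemma xf_linear i : linear (xf i).
Proof.
move=> c u v; apply: funext => a; rewrite /xf !addrfctE !scalrfctE.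
by case: (a i) => [|k]; rewrite ?scaler0 ?addr0.
Qed.

Definition unit_fun : V := fun _ => 1.
Lemma unit_fun_neq0 : unit_fun != 0.
Proof. by apply/eqP => /(congr1 (fun f : V => f (fun _ => 0%N))) /eqP; rewrite oner_eq0. Qed.

Local Notation Op := (endo_of unit_fun_neq0).
Definition yop i : Op := Endo (yf_linear i).
Definition xop i : Op := Endo (xf_linear i).

Lemma shift_relations : jacobson_relations xop yop.
Proof.
split=> [i|i j ij]; first by apply: endo_ext => u; apply: funext => a;
  rewrite endo_mulE /= /xf /yf upd_eq upd_upd upd_id.
split; apply: endo_ext => u; apply: funext => a; rewrite !endo_mulE /= /xf /yf.
- by rewrite upd_neq //; case: (a i) => // k; rewrite upd_neq 1?eq_sym // upd_comm // eq_sym.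
- case Ei: (a i) => [|k]; case Ej: (a j) => [|l]; rewrite ?upd_neq ?Ei ?Ej // 1?eq_sym //.
  by rewrite upd_comm.
- by rewrite upd_neq 1?eq_sym // [in RHS]upd_neq // upd_comm // eq_sym.
Qed.

Lemma shift_idem_at0 (s : seq 'I_n) (u : V) :
  (\prod_(i <- s) (1 - xop i * yop i)) u (fun _ => 0%N) = u (fun _ => 0%N).
Proof.
elim: s u => [|i s IH] u; first by rewrite big_nil.
by rewrite big_cons endo_mulE endo_subE endo_oneE addrfctE opprfctE /= subr0 IH.
Qed.

End Model.

Lemma presentation_e_neq0 (K : fieldType) (A : algType K) (n : nat) (x y : 'I_n -> A) :
  is_jacobson_presentation x y -> e x y != 0.
Proof.
move=> [_ univ]; have [[f fxy] _] := univ _ _ _ (shift_relations K n).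
apply/eqP => /(congr1 (fun a => f a (@unit_fun K n) (fun _ => 0%N))).
rewrite rmorph0 rmorph_prod (eq_bigr (fun i => 1 - xop K i * yop K i)) => [|i _].
  by rewrite shift_idem_at0 /unit_fun /= => /eqP; rewrite oner_eq0.
by have [<- <-] := fxy i; rewrite /ei rmorphB rmorph1 rmorphM.
Qed.

End ShiftModel.

(* By the uniqueness part of the universal property, the span of the
   monomials, which is a subalgebra containing the generators, is everything. *)
Lemma presentation_monomials_span (K : fieldType) (A : algType K) (n : nat)
    (x y : 'I_n -> A) :
  is_jacobson_presentation x y -> forall v, inspan (monomial x y) v.
Proof.
move=> [rel univ].
pose P : pred A := fun v => `[< inspan (monomial x y) v >].
have monP a b : P (mon x y a b) by apply/asboolP/inspan_gen; exists a, b.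
have P_closed : GRing.subsemialg_closed P.
  split.
  - by have := monP (fun _ => 0%N) (fun _ => 0%N); rewrite /mon xpow0 ypow0 mulr1.
  - by split=> [|u v /asboolP Pu /asboolP Pv]; apply/asboolP; [apply: inspan0|apply: inspanD].
  - by move=> c u /asboolP Pu; apply/asboolP/inspanZ.
  - move=> u v /asboolP Pu /asboolP Pv; apply/asboolP.
    apply: inspan_mul Pu Pv => _ _ [a [b ->]] [c [d ->]].
    by rewrite mon_mul //; apply: inspan_gen; do 2 eexists.
have Px i : P (x i) by rewrite (x_xpow x i) -[xpow _ _]mulr1 -(ypow0 y); apply: monP.
have Py i : P (y i) by rewrite (y_ypow y i) -[ypow _ _]mul1r -(xpow0 x); apply: monP.
pose sx i : subalg P_closed := SubAlg P_closed (Px i).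
pose sy i : subalg P_closed := SubAlg P_closed (Py i).
have srel : jacobson_relations sx sy.
  split=> [i|i j ij]; first by apply: val_inj; rewrite rmorphM rmorph1 /= (y_x rel).
  by have [? ? ?] := proj2 rel i j ij; split; apply: val_inj; rewrite !rmorphM /=.
have [[f fxy] _] := univ _ _ _ srel.
have [_ uniq] := univ _ _ _ rel.
pose g : {lrmorphism A -> A} := val \o f.
have gx v : g v = v.
  by apply: (uniq g idfun) => i; rewrite /g /= (proj1 (fxy i)) (proj2 (fxy i)).
by move=> v; rewrite -(gx v); apply/asboolP/(valP (f v)).
Qed.

Theorem proposition4p1 (K : fieldType) (n : nat) (A : algType K)
    (x y : 'I_n -> A) (hn : (0 < n)%N)
    (hA : is_jacobson_presentation x y) :
  (* (1) *) center_is_scalars A /\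
  (* (2) *) (forall a : A, a <> 0 ->
               (exists f, Fn x y f /\ f * a <> 0) /\ (exists f, Fn x y f /\ a * f <> 0)) /\
  (* (3) *) (is_ideal (Fn x y) /\ nonzero_set (Fn x y) /\
             (forall I : A -> Prop, is_ideal I -> nonzero_set I -> subset_of (Fn x y) I) /\
             same_set (set_prod (Fn x y) (Fn x y)) (Fn x y) /\
             essential_left (Fn x y) /\ essential_right (Fn x y) /\
             same_set (left_socle (A:=A)) (Fn x y) /\ same_set (right_socle (A:=A)) (Fn x y) /\
             same_set (bimodule_socle (A:=A)) (Fn x y) /\
             simple_bimodule (Fn x y)) /\
  (* (4) *) prime_algebra A /\
  (* (5) *) (forall I : A -> Prop, is_ideal I -> nonzero_set I -> essential_left I /\ essential_right I).
Proof.
have [rel _] := hA.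
have span := presentation_monomials_span hA.
have e_neq0 := ShiftModel.presentation_e_neq0 hA.
have Fn_id := Fn_ideal rel span; have Fn_nz := Fn_nonzero rel e_neq0.
have [Fn_essl Fn_essr] := ideal_essential rel span e_neq0 Fn_id Fn_nz.
split; first exact: jacobson_center rel span e_neq0.
split; first exact: Fn_faithful rel span e_neq0.
split; last first.
  by split; [exact: jacobson_prime rel span e_neq0|exact: ideal_essential rel span e_neq0].
split; first exact: Fn_id.
split; first exact: Fn_nz.
split; first exact: Fn_min rel span e_neq0.
split; first exact: Fn_idem rel span.
split; first exact: Fn_essl.
split; first exact: Fn_essr.
split; first exact: Fn_left_socle rel span e_neq0.
split; first exact: Fn_right_socle rel span e_neq0.
split; first exact: Fn_bimodule_socle rel span e_neq0.
exact: Fn_simple rel span e_neq0.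
Qed.
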